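(* Let $\xi\in\mathbb{R}$, $\alpha\ne0$ and $c>0$, let $\phi(u)=(1+u)^3(1-u)^3$ for $|u|\le1$ and $\phi(u)=0$ otherwise, and define $G:\mathbb{R}\to\mathbb{R}$ by $G(x)=x+\alpha\,\phi\big(\frac{x-\xi}{c}\big)(x-\xi)|x-\xi|$. If $c<\frac{1}{6|\alpha|}$, then $G'(x)>0$ for all $x\in\mathbb{R}$, $G'(x)=1$ for all $x$ with $|x-\xi|>c$, and therefore $G$ has a global inverse $G^{-1}$. *)

From Stdlib Require Import Reals Lra.
From Coquelicot Require Import Coquelicot.
Open Scope R_scope.

Definition phi (u : R) : R :=
  if Rle_dec (Rabs u) 1 then (1 + u) ^ 3 * (1 - u) ^ 3 else 0.

Definition G (xi alpha c : R) (x : R) : R :=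
  x + alpha * phi ((x - xi) / c) * (x - xi) * Rabs (x - xi).

(* With u = (x - xi)/c one has G x = x + alpha c^2 psi u, where psi u = phi u * u|u|.
   Writing phi u = (max 0 (1 - u^2))^3 and u|u| = (max 0 u)^2 - (max 0 (-u))^2
   exhibits psi as a product of C^1 functions, with
   psi' u = 2|u| (max 0 (1 - u^2))^2 (1 - 4u^2), which is bounded by 6 and vanishes
   for |u| > 1.  Hence G' = 1 + alpha c psi' u >= 1 - 6 c |alpha| > 0, and since
   |G x - x| <= |alpha| c^2, the continuous increasing map G is onto by the
   intermediate value theorem. *)
From Stdlib Require Import Reals Lra Lia.
From Coquelicot Require Import Coquelicot.
Open Scope R_scope.

Lemma is_derive_glue (f g h : R -> R) (a l d : R) : 0 < d ->
  (forall x, a - d < x <= a -> f x = g x) ->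
  (forall x, a <= x < a + d -> f x = h x) ->
  is_derive g a l -> is_derive h a l -> is_derive f a l.
Proof.
  rewrite !is_derive_Reals. intros Hd Hg Hh Dg Dh e He.
  destruct (Dg e He) as [[dg Hdg0] Hdg], (Dh e He) as [[dh Hdh0] Hdh]; simpl in *.
  assert (Hpos : 0 < Rmin d (Rmin dg dh)) by (repeat apply Rmin_pos; assumption).
  exists (mkposreal _ Hpos). intros k Hk0 Hk; simpl in Hk.
  pose proof (Rmin_l d (Rmin dg dh)). pose proof (Rmin_r d (Rmin dg dh)).
  pose proof (Rmin_l dg dh). pose proof (Rmin_r dg dh).
  assert (Hkd : Rabs k < d) by lra.
  apply Rabs_def2 in Hkd.
  destruct (Rle_or_lt k 0).
  - rewrite (Hg (a + k)), (Hg a) by lra. apply Hdg; auto; lra.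
  - rewrite (Hh (a + k)), (Hh a) by lra. apply Hdh; auto; lra.
Qed.

Lemma is_derive_Rmax0_pow (n : nat) (t : R) :
  is_derive (fun s => Rmax 0 s ^ S (S n)) t (INR (S (S n)) * Rmax 0 t ^ S n).
Proof.
  assert (Dzero : forall s, is_derive (fun _ : R => 0) s 0) by (intro; auto_derive; auto).
  assert (Dpow : forall s, is_derive (fun s => s ^ S (S n)) s (INR (S (S n)) * s ^ S n)).
  { intro s. auto_derive; auto. simpl. ring. }
  assert (Neg : forall s, s <= 0 -> Rmax 0 s ^ S (S n) = 0).
  { intros s Hs. rewrite Rmax_left by lra. apply pow_i. lia. }
  assert (Pos : forall s, 0 <= s -> Rmax 0 s = s) by (intros; apply Rmax_right; lra).
  destruct (Rtotal_order t 0) as [Ht | [-> | Ht]].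
  - rewrite Rmax_left, pow_i, Rmult_0_r by (lia || lra).
    apply (is_derive_glue _ (fun _ => 0) (fun _ => 0) t 0 (- t)); auto; try lra;
      intros x Hx; apply Neg; lra.
  - rewrite Rmax_left, pow_i, Rmult_0_r by (lia || lra).
    apply (is_derive_glue _ (fun _ => 0) (fun s => s ^ S (S n)) 0 0 1); try lra.
    + intros x Hx. apply Neg. lra.
    + intros x Hx. rewrite Pos by lra. reflexivity.
    + apply Dzero.
    + pose proof (Dpow 0) as D. rewrite pow_i, Rmult_0_r in D by lia. exact D.
  - rewrite Pos by lra.
    apply (is_derive_glue _ (fun s => s ^ S (S n)) (fun s => s ^ S (S n)) t _ t); auto; try lra;
      intros x Hx; rewrite Pos by lra; reflexivity.
Qed.

Definition psi (u : R) : R := phi u * (u * Rabs u).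

Definition dpsi (u : R) : R := 2 * Rabs u * Rmax 0 (1 - u ^ 2) ^ 2 * (1 - 4 * u ^ 2).

Lemma pow2_le_1_iff (u : R) : u ^ 2 <= 1 <-> Rabs u <= 1.
Proof.
  rewrite <- pow2_abs. pose proof (Rabs_pos u). split; intro; nra.
Qed.

Lemma phi_Rmax0 (u : R) : phi u = Rmax 0 (1 - u ^ 2) ^ 3.
Proof.
  unfold phi. destruct (Rle_dec (Rabs u) 1) as [Hu | Hu]; rewrite <- pow2_le_1_iff in Hu.
  - rewrite Rmax_right by lra. ring.
  - rewrite Rmax_left by lra. ring.
Qed.

Lemma mul_Rabs_Rmax0 (u : R) : u * Rabs u = Rmax 0 u ^ 2 - Rmax 0 (- u) ^ 2.
Proof.
  destruct (Rle_or_lt 0 u).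
  - rewrite Rabs_right, Rmax_right, Rmax_left by lra. ring.
  - rewrite Rabs_left, Rmax_left, Rmax_right by lra. ring.
Qed.

Lemma is_derive_psi (u : R) : is_derive psi u (dpsi u).
Proof.
  set (p := Rmax 0 (1 - u ^ 2)).
  assert (Dphi : is_derive (fun s => Rmax 0 (1 - s ^ 2) ^ 3) u (3 * p ^ 2 * (- 2 * u))).
  { replace (3 * p ^ 2 * (- 2 * u)) with (scal (- 2 * u) (INR 3 * p ^ 2))
      by (unfold scal; simpl; unfold mult; simpl; ring).
    apply (is_derive_comp (fun t => Rmax 0 t ^ 3) (fun s => 1 - s ^ 2)).
    - exact (is_derive_Rmax0_pow 1 (1 - u ^ 2)).
    - auto_derive; auto. ring. }
  assert (Dsq : is_derive (fun s => Rmax 0 s ^ 2 - Rmax 0 (- s) ^ 2) u (2 * Rabs u)).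
  { replace (2 * Rabs u) with (INR 2 * Rmax 0 u - scal (-1) (INR 2 * Rmax 0 (- u))).
    - apply (is_derive_minus (fun s => Rmax 0 s ^ 2) (fun s => Rmax 0 (- s) ^ 2)).
      + pose proof (is_derive_Rmax0_pow 0 u) as D. rewrite pow_1 in D. exact D.
      + apply (is_derive_comp (fun t => Rmax 0 t ^ 2) Ropp).
        * pose proof (is_derive_Rmax0_pow 0 (- u)) as D. rewrite pow_1 in D. exact D.
        * auto_derive; auto.
    - unfold scal; simpl; unfold mult; simpl.
      destruct (Rle_or_lt 0 u).
      + rewrite Rabs_right, Rmax_right, (Rmax_left 0 (- u)) by lra. ring.
      + rewrite Rabs_left, Rmax_left, (Rmax_right 0 (- u)) by lra. ring. }
  apply (is_derive_ext (fun s => Rmax 0 (1 - s ^ 2) ^ 3 * (Rmax 0 s ^ 2 - Rmax 0 (- s) ^ 2))).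
  { intro s. unfold psi. rewrite phi_Rmax0, mul_Rabs_Rmax0. reflexivity. }
  assert (E : 3 * p ^ 2 * (- 2 * u) * (u * Rabs u) + p ^ 3 * (2 * Rabs u) = dpsi u).
  { unfold dpsi, p. destruct (Rle_or_lt (1 - u ^ 2) 0).
    - rewrite Rmax_left by lra. ring.
    - rewrite Rmax_right by lra. ring. }
  rewrite <- E, mul_Rabs_Rmax0.
  apply (is_derive_mult (fun s => Rmax 0 (1 - s ^ 2) ^ 3) (fun s => Rmax 0 s ^ 2 - Rmax 0 (- s) ^ 2));
    [exact Dphi | exact Dsq | intros; apply Rmult_comm].
Qed.

Lemma Rabs_dpsi_le (u : R) : Rabs (dpsi u) <= 6.
Proof.
  unfold dpsi. destruct (Rle_or_lt (u ^ 2) 1) as [Hu | Hu].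
  - rewrite Rmax_right by lra.
    pose proof (proj1 (pow2_le_1_iff u) Hu) as Hau. pose proof (Rabs_pos u).
    assert (H2 : 0 <= (1 - u ^ 2) ^ 2 <= 1) by (split; [apply pow2_ge_0 | nra]).
    rewrite !Rabs_mult, (Rabs_right 2), (Rabs_right ((1 - u ^ 2) ^ 2)), Rabs_Rabsolu by lra.
    assert (H3 : Rabs (1 - 4 * u ^ 2) <= 3) by (apply Rabs_le; nra).
    pose proof (Rabs_pos (1 - 4 * u ^ 2)).
    assert (2 * Rabs u * (1 - u ^ 2) ^ 2 <= 2) by nra.
    assert (0 <= 2 * Rabs u * (1 - u ^ 2) ^ 2) by nra.
    nra.
  - rewrite Rmax_left by lra. rewrite pow_i by lia. rewrite Rmult_0_r, !Rmult_0_l, Rabs_R0. lra.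
Qed.

Lemma dpsi_eq0 (u : R) : 1 < Rabs u -> dpsi u = 0.
Proof.
  intro Hu. assert (u ^ 2 > 1) by (rewrite <- pow2_abs; nra).
  unfold dpsi. rewrite Rmax_left by lra. rewrite pow_i by lia. ring.
Qed.

Lemma Rabs_psi_le (u : R) : Rabs (psi u) <= 1.
Proof.
  unfold psi. rewrite phi_Rmax0, Rabs_mult, Rabs_mult, Rabs_Rabsolu.
  replace (Rabs u * Rabs u) with (u ^ 2) by (rewrite <- pow2_abs; ring).
  pose proof (pow2_ge_0 u).
  destruct (Rle_or_lt (u ^ 2) 1) as [Hu | Hu].
  - rewrite Rmax_right, Rabs_right by (try apply Rle_ge, pow_le; lra).
    assert (0 <= (1 - u ^ 2) ^ 3 <= 1).
    { split; [apply pow_le | rewrite <- (pow1 3); apply pow_incr]; lra. }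
    nra.
  - rewrite Rmax_left, pow_i, Rabs_R0 by (lia || lra). lra.
Qed.

Lemma G_psi (xi alpha c x : R) : 0 < c ->
  G xi alpha c x = x + alpha * c ^ 2 * psi ((x - xi) / c).
Proof.
  intro Hc. unfold G, psi. set (u := (x - xi) / c).
  replace (x - xi) with (c * u) by (unfold u; field; lra).
  rewrite Rabs_mult, (Rabs_right c) by lra. ring.
Qed.

Lemma is_derive_G (xi alpha c x : R) : 0 < c ->
  is_derive (G xi alpha c) x (1 + alpha * c * dpsi ((x - xi) / c)).
Proof.
  intro Hc.
  apply (is_derive_ext (fun x => x + alpha * c ^ 2 * psi ((x - xi) / c))).
  { intro t. symmetry. apply G_psi, Hc. }
  auto_derive.
  - eexists. apply is_derive_psi.
  - change ((x + - xi) * / c) with ((x - xi) / c).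
    rewrite (is_derive_unique _ _ _ (is_derive_psi _)). field. lra.
Qed.

Lemma continuous_increasing_bounded_shift_inverse (f : R -> R) (M : R) :
  continuity f -> (forall x y, x < y -> f x < f y) ->
  (forall x, Rabs (f x - x) <= M) ->
  exists g : R -> R, (forall x, g (f x) = x) /\ (forall y, f (g y) = y).
Proof.
  intros Hcont Hincr Hshift.
  assert (Hbetween : forall y, Rmin (f (y - M)) (f (y + M)) <= y <= Rmax (f (y - M)) (f (y + M))).
  { intro y.
    pose proof (proj1 (Rabs_le_between' _ _ _) (Hshift (y - M))).
    pose proof (proj1 (Rabs_le_between' _ _ _) (Hshift (y + M))).
    pose proof (Rmin_l (f (y - M)) (f (y + M))). pose proof (Rmax_r (f (y - M)) (f (y + M))).
    lra. }
  set (g y := proj1_sig (IVT_gen f _ _ y Hcont (Hbetween y))).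
  assert (Hfg : forall y, f (g y) = y) by (intro y; exact (proj2 (proj2_sig (IVT_gen _ _ _ _ _ _)))).
  exists g. split; [|exact Hfg].
  intro x. pose proof (Hfg (f x)) as E.
  destruct (Rtotal_order (g (f x)) x) as [H | [H | H]]; [| exact H |];
    apply Hincr in H; lra.
Qed.

Lemma one_add_scaled_dpsi_pos (a u : R) : 6 * Rabs a < 1 -> 1 + a * dpsi u > 0.
Proof.
  intro Ha.
  assert (Hlt : Rabs (a * dpsi u) < 1).
  { rewrite Rabs_mult. apply (Rle_lt_trans _ (Rabs a * 6)); [|lra].
    apply Rmult_le_compat_l; [apply Rabs_pos | apply Rabs_dpsi_le]. }
  apply Rabs_lt_between in Hlt. lra.
Qed.

Lemma Rabs_G_sub_le (xi alpha c x : R) : 0 < c ->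
  Rabs (G xi alpha c x - x) <= Rabs alpha * c ^ 2.
Proof.
  intro Hc. rewrite G_psi by exact Hc.
  replace (x + alpha * c ^ 2 * psi ((x - xi) / c) - x) with (alpha * c ^ 2 * psi ((x - xi) / c)) by ring.
  rewrite !Rabs_mult, (Rabs_right (c ^ 2)) by (apply Rle_ge, pow2_ge_0).
  rewrite <- (Rmult_1_r (Rabs alpha * c ^ 2)) at 2.
  apply Rmult_le_compat_l, Rabs_psi_le.
  apply Rmult_le_pos; [apply Rabs_pos | apply pow2_ge_0].
Qed.

Theorem lemma2p4 (xi alpha c : R) (halpha : alpha <> 0) (hc : 0 < c)
  (hsmall : c < 1 / (6 * Rabs alpha)) :
  (forall x : R, ex_derive (G xi alpha c) x /\ Derive (G xi alpha c) x > 0) /\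
  (forall x : R, Rabs (x - xi) > c -> Derive (G xi alpha c) x = 1) /\
  (exists Ginv : R -> R,
      (forall x : R, Ginv (G xi alpha c x) = x) /\
      (forall y : R, G xi alpha c (Ginv y) = y)).
Proof.
  assert (Hsmall : 6 * Rabs (alpha * c) < 1).
  { rewrite Rabs_mult, (Rabs_right c) by lra. pose proof (Rabs_pos_lt _ halpha).
    apply (Rmult_lt_compat_r (6 * Rabs alpha)) in hsmall; [|lra].
    replace (1 / (6 * Rabs alpha) * (6 * Rabs alpha)) with 1 in hsmall by (field; lra). lra. }
  set (dG x := 1 + alpha * c * dpsi ((x - xi) / c)).
  assert (HD : forall x, is_derive (G xi alpha c) x (dG x)) by (intro; apply is_derive_G, hc).
  assert (HDerive : forall x, Derive (G xi alpha c) x = dG x) by (intro; apply is_derive_unique, HD).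
  assert (HdG : forall x, dG x > 0) by (intro; apply one_add_scaled_dpsi_pos, Hsmall).
  split; [|split].
  - intro x. split; [eexists; apply HD | rewrite HDerive; apply HdG].
  - intros x Hx. rewrite HDerive. unfold dG. rewrite dpsi_eq0; [ring|].
    rewrite Rabs_div, (Rabs_right c) by lra.
    apply (Rmult_lt_reg_r c); [lra|]. field_simplify; lra.
  - apply (continuous_increasing_bounded_shift_inverse _ (Rabs alpha * c ^ 2)).
    + intro x. apply continuity_pt_filterlim, (ex_derive_continuous (G xi alpha c)).
      eexists. apply HD.
    + intros x y Hxy. apply (incr_function _ m_infty p_infty dG); easy.
    + intro x. apply Rabs_G_sub_le, hc.
Qed.
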